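(* Let $F$ be a field of characteristic different from $2$ and $3$. Then there exists a unital associative $F$-algebra $R$ such that the Lie algebra $[R]$ is $5$-Engel but the group of units $U(R)$ is not a $5$-Engel group. Moreover, such an $R$ can be chosen to be generated, as a unital $F$-algebra, by $2$ nilpotent elements.
   Context: For an associative algebra $R$, $[R]$ denotes the Lie algebra with the same underlying vector space and bracket $[a,b]=ab-ba$, and $U(R)$ denotes the group of units of $R$. Set $[x,{}_{(1)}y]=[x,y]$ and $[x,{}_{(k+1)}y]=[[x,{}_{(k)}y],y]$ for $k\ge 1$. A Lie algebra $L$ is $n$-Engel if $[u,{}_{(n)}v]=0$ for all $u,v\in L$. For a group, $(x,y)=(x,{}_{(1)}y)=x^{-1}y^{-1}xy$ and $(x,{}_{(k+1)}y)=((x,{}_{(k)}y),y)$; a group $G$ is $n$-Engel if $(u,{}_{(n)}v)=1$ for all $u,v\in G$. *)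

From HB Require Import structures.
From mathcomp Require Import all_boot all_order all_algebra.
Set Implicit Arguments. Unset Strict Implicit. Unset Printing Implicit Defensive.
Import GRing.Theory.
Local Open Scope ring_scope.

Definition lie_br (R : pzRingType) (a b : R) : R := a * b - b * a.

Fixpoint lie_iter (R : pzRingType) (x y : R) (k : nat) : R :=
  match k with 0 => x | k'.+1 => lie_br (lie_iter x y k') y end.

Definition lie_engel (R : pzRingType) (n : nat) : Prop :=
  forall u v : R, lie_iter u v n = 0.

Definition is_inverse_pair (R : pzRingType) (a a' : R) : Prop :=
  a * a' = 1 /\ a' * a = 1.

(* Iterated group commutator (x, _(k) y) in U(R), carried as a pair
   (element, its inverse).  With x = a (inverse a'), y = b (inverse b'):
   (c, y) = c^-1 y^-1 c y, whose inverse is y^-1 c^-1 y c. *)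
Fixpoint gcomm_iter (R : pzRingType) (a a' b b' : R) (k : nat) : R * R :=
  match k with
  | 0 => (a, a')
  | k'.+1 => let: (c, c') := gcomm_iter a a' b b' k' in
             (c' * b' * c * b, b' * c' * b * c)
  end.

Definition units_engel (R : pzRingType) (n : nat) : Prop :=
  forall a a' b b' : R, is_inverse_pair a a' -> is_inverse_pair b b' ->
    (gcomm_iter a a' b b' n).1 = 1.

Definition nilp (R : pzRingType) (x : R) : Prop := exists m : nat, x ^+ m = 0.

Definition in_subalg_gen2 (F : pzRingType) (A : algType F) (x y r : A) : Prop :=
  forall S : A -> Prop,
    S 1 -> S x -> S y ->
    (forall u v, S u -> S v -> S (u + v)) ->
    (forall (c : F) u, S u -> S (c *: u)) ->
    (forall u v, S u -> S v -> S (u * v)) ->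
    S r.

Definition gen_by_2_nilpotents (F : pzRingType) (A : algType F) : Prop :=
  exists x y : A, nilp x /\ nilp y /\ forall r : A, in_subalg_gen2 x y r.

From HB Require Import structures.
From mathcomp Require Import all_boot all_order all_algebra.
Set Implicit Arguments. Unset Strict Implicit. Unset Printing Implicit Defensive.
Import GRing.Theory.
Local Open Scope ring_scope.

(* The algebra has a basis e_0 = 1, ..., e_23 (e_k = [basis k]) of monomials in
   x = e_5 and y = e_1, where x^2 = 0 and y^5 = 0, with integer structure constants.  Every
   fact needed about it -- the ring axioms, the identity [u,_5 v] = 0 and
   (1 + x,_5 1 + y) = 1 + 12 e_23 -- is a polynomial identity with integer coefficients in
   the coordinates of the elements involved.  Such identities are checked by computing
   with vectors of integer polynomials, whose evaluation commutes with the operations of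
   the algebra.  Since char F is neither 2 nor 3, the coefficient 12 is nonzero, so the
   units do not form a 5-Engel group, and the basis monomials, which are x, y-words
   divided by 1, 3, 4 or 12, show that x and y generate the algebra. *)

Record sterm := STerm { scoef : int; sleft : nat; sright : nat }.

Definition sterm_tuple (t : sterm) := (scoef t, sleft t, sright t).
Lemma sterm_tupleK : cancel sterm_tuple (fun t => STerm t.1.1 t.1.2 t.2).
Proof. by case. Qed.
HB.instance Definition _ := Equality.copy sterm (can_type sterm_tupleK).

(* Row k lists the terms of the k-th coordinate of a product u v: [STerm c i j]
   contributes c u_i v_j.  [nil_table] omits the terms coming from the unit e_0. *)
Definition nil_table : seq (seq sterm) := [::
  [::];
  [::];
  [:: STerm 1 1 1];
  [:: STerm 1 1 2; STerm 1 2 1];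
  [:: STerm 1 1 3; STerm 1 2 2; STerm 1 3 1];
  [::];
  [:: STerm 1 5 1];
  [:: STerm 1 1 5];
  [:: STerm 1 5 2; STerm 1 6 1];
  [:: STerm 1 1 6; STerm 1 7 1];
  [:: STerm 1 1 7; STerm 1 2 5];
  [:: STerm 1 5 3; STerm 1 6 2; STerm 1 8 1];
  [:: STerm 1 1 8; STerm 1 7 2; STerm 1 9 1];
  [:: STerm 1 1 9; STerm 1 2 6; STerm 1 10 1];
  [:: STerm 1 1 10; STerm 1 2 7; STerm 1 3 5];
  [:: STerm 1 5 4; STerm 1 6 3; STerm 1 8 2; STerm 1 11 1];
  [:: STerm 12 1 11; STerm (-16) 1 13; STerm (-5) 1 14; STerm (-16) 2 9; STerm (-5) 2 10;
      STerm (-16) 3 6; STerm (-5) 3 7; STerm (-5) 4 5; STerm 12 7 3; STerm 12 9 2;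
      STerm 12 12 1; STerm (-16) 14 1];
  [:: STerm 4 1 12; STerm 4 1 13; STerm (-5) 1 14; STerm 4 2 8; STerm 4 2 9;
      STerm (-5) 2 10; STerm 4 3 6; STerm (-5) 3 7; STerm (-5) 4 5; STerm 4 10 2;
      STerm 4 13 1; STerm 4 14 1];
  [:: STerm 12 1 15; STerm 1 1 16; STerm (-1) 1 17; STerm 12 2 11; STerm (-4) 2 12;
      STerm (-20) 2 13; STerm (-4) 3 8; STerm (-20) 3 9; STerm (-20) 4 6; STerm 12 7 4;
      STerm 12 9 3; STerm 12 10 3; STerm 12 12 2; STerm 12 13 2; STerm (-4) 14 2;
      STerm 1 16 1; STerm 3 17 1];
  [:: STerm 1 5 7; STerm 1 6 5];
  [:: STerm 1 5 9; STerm 1 5 10; STerm 1 6 6; STerm 1 6 7; STerm 1 8 5; STerm 1 19 1];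
  [:: STerm 3 5 12; STerm 3 5 13; STerm (-1) 5 14; STerm 3 6 8; STerm 3 6 9;
      STerm (-1) 6 10; STerm 3 8 6; STerm (-1) 8 7; STerm (-1) 11 5; STerm 3 19 2;
      STerm 3 20 1];
  [:: STerm 1 5 16; STerm 3 5 17; STerm 12 6 11; STerm 12 6 12; STerm (-4) 6 13;
      STerm (-20) 6 14; STerm 12 8 8; STerm (-4) 8 9; STerm (-20) 8 10; STerm (-4) 11 6;
      STerm (-20) 11 7; STerm (-20) 15 5; STerm 12 19 3; STerm 12 20 2; STerm 4 21 1];
  [:: STerm 1 5 18; STerm 12 6 15; STerm 1 6 16; STerm (-1) 6 17; STerm 12 8 11;
      STerm (-4) 8 12; STerm (-20) 8 13; STerm (-4) 11 8; STerm (-20) 11 9;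
      STerm (-20) 15 6; STerm 12 19 4; STerm 12 20 3; STerm 4 21 2; STerm 1 22 1]].

Definition mul_table : seq (seq sterm) :=
  [seq (if k is 0 then [:: STerm 1 0 0] else [:: STerm 1 0 k; STerm 1 k 0])
         ++ nth [::] nil_table k | k <- iota 0 24].

(* Entry k is (c, w) such that the product of the e_i for i in w is c e_k. *)
Definition basis_words : seq (nat * seq nat) := [::
  (1, [::]); (1, [:: 1]); (1, [:: 1; 1]); (1, [:: 1; 1; 1]); (1, [:: 1; 1; 1; 1]);
  (1, [:: 5]); (1, [:: 5; 1]); (1, [:: 1; 5]);
  (1, [:: 5; 1; 1]); (1, [:: 1; 5; 1]); (1, [:: 1; 1; 5]);
  (1, [:: 5; 1; 1; 1]); (1, [:: 1; 5; 1; 1]); (1, [:: 1; 1; 5; 1]); (1, [:: 1; 1; 1; 5]);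
  (1, [:: 5; 1; 1; 1; 1]); (12, [:: 1; 5; 1; 1; 1]); (4, [:: 1; 1; 5; 1; 1]);
  (12, [:: 1; 5; 1; 1; 1; 1]);
  (1, [:: 5; 1; 5]); (1, [:: 5; 1; 5; 1]); (3, [:: 5; 1; 5; 1; 1]);
  (12, [:: 5; 1; 5; 1; 1; 1]); (12, [:: 5; 1; 5; 1; 1; 1; 1])]%N.

Definition engel_alg (R : comNzRingType) : Type := 'rV[R]_24.
HB.instance Definition _ (R : comNzRingType) := GRing.Lmodule.on (engel_alg R).

Section Multiplication.
Variable R : comNzRingType.

Definition coord (u : engel_alg R) (i : nat) : R := u 0 (inord i).

Definition amul (u v : engel_alg R) : engel_alg R :=
  \row_(k < 24) \sum_(t <- nth [::] mul_table k)
                  (scoef t)%:~R * coord u (sleft t) * coord v (sright t).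

Definition basis (k : nat) : engel_alg R := \row_(i < 24) (i == k :> nat)%:R.

Lemma amulDl : left_distributive amul +%R.
Proof.
move=> u v w; apply/rowP => k; rewrite !mxE -big_split; apply: eq_bigr => t _.
by rewrite /coord mxE mulrDr mulrDl.
Qed.

Lemma amulDr : right_distributive amul +%R.
Proof.
move=> u v w; apply/rowP => k; rewrite !mxE -big_split; apply: eq_bigr => t _.
by rewrite /coord mxE mulrDr.
Qed.

Lemma scale_amull a u v : a *: amul u v = amul (a *: u) v.
Proof.
apply/rowP => k; rewrite !mxE mulr_sumr; apply: eq_bigr => t _.
by rewrite /coord mxE mulrA mulrA [a * _]mulrC -!mulrA.
Qed.

Lemma scale_amulr a u v : a *: amul u v = amul u (a *: v).
Proof.
apply/rowP => k; rewrite !mxE mulr_sumr; apply: eq_bigr => t _.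
by rewrite /coord mxE mulrCA mulrA.
Qed.

Lemma basis0_neq0 : basis 0 != 0.
Proof. by apply/eqP => /rowP/(_ 0); rewrite !mxE /= => /eqP; rewrite oner_eq0. Qed.

End Multiplication.

(** * Computing with integer polynomials *)

(* A term (c, m) stands for c times the product of the variables listed in m. *)
Definition spoly := seq (int * seq nat).
Definition svec := seq spoly.

Fixpoint spoly_insert (t : int * seq nat) (p : spoly) : spoly :=
  if p is s :: p' then
    if s.2 == t.2 then (if s.1 + t.1 == 0 then p' else (s.1 + t.1, s.2) :: p')
    else s :: spoly_insert t p'
  else [:: t].

Definition spoly_norm (p : spoly) : spoly :=
  foldr spoly_insert [::] [seq (t.1, sort leq t.2) | t <- p].

Definition svec_of (f : nat -> spoly) : svec := [seq f k | k <- iota 0 24].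

Definition svec_zero : svec := svec_of (fun=> [::]).
Definition svec_basis (k : nat) : svec :=
  svec_of (fun i => if i == k then [:: (1, [::])] else [::]).
Definition svec_var (m : nat) : svec := svec_of (fun k => [:: (1, [:: m * 24 + k])]).

Definition svec_add (A B : svec) : svec :=
  svec_of (fun k => spoly_norm (nth [::] A k ++ nth [::] B k)).
Definition svec_scale (c : int) (A : svec) : svec :=
  svec_of (fun k => [seq (c * t.1, t.2) | t <- nth [::] A k]).
Definition svec_sub (A B : svec) : svec := svec_add A (svec_scale (-1) B).
Definition svec_mul (A B : svec) : svec :=
  svec_of (fun k => spoly_norm (flatten
    [seq [seq (scoef t * a.1 * b.1, a.2 ++ b.2)
           | a <- nth [::] A (sleft t), b <- nth [::] B (sright t)]
     | t <- nth [::] mul_table k])).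

Definition svec_exp (A : svec) (n : nat) : svec := iter n (svec_mul A) (svec_basis 0).
Definition svec_geom (A : svec) (n : nat) : svec :=
  foldr svec_add svec_zero [seq svec_exp (svec_scale (-1) A) i | i <- iota 0 n].
Definition svec_word (w : seq nat) : svec :=
  foldr (fun i => svec_mul (svec_basis i)) (svec_basis 0) w.

Definition svec_lie (A B : svec) : svec := svec_sub (svec_mul A B) (svec_mul B A).
Fixpoint svec_lie_iter (A B : svec) (k : nat) : svec :=
  if k is k'.+1 then svec_lie (svec_lie_iter A B k') B else A.
Fixpoint svec_gcomm_iter (A A' B B' : svec) (k : nat) : svec * svec :=
  if k is k'.+1 then
    let: (C, C') := svec_gcomm_iter A A' B B' k' in
    (svec_mul (svec_mul (svec_mul C' B') C) B, svec_mul (svec_mul (svec_mul B' C') B) C)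
  else (A, A').

(* Normal forms are unique only up to the order of the terms, hence the comparison
   through the difference. *)
Definition svec_eq (A B : svec) : bool := all (pred1 [::]) (svec_sub A B).


Section Evaluation.
Variables (R : comNzRingType) (env : nat -> R).

Definition meval (m : seq nat) : R := \prod_(i <- m) env i.
Definition peval (p : spoly) : R := \sum_(t <- p) t.1%:~R * meval t.2.
Definition svec_eval (A : svec) : engel_alg R := \row_(k < 24) peval (nth [::] A k).

Lemma peval_cons t p : peval (t :: p) = t.1%:~R * meval t.2 + peval p.
Proof. exact: big_cons. Qed.

Lemma peval_cat p q : peval (p ++ q) = peval p + peval q.
Proof. exact: big_cat. Qed.

Lemma peval_flatten ps : peval (flatten ps) = \sum_(p <- ps) peval p.
Proof. exact: big_flatten. Qed.

Lemma peval_insert t p : peval (spoly_insert t p) = peval (t :: p).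
Proof.
elim: p => [|s p IHp] //=.
have [st|_] /= := eqVneq s.2 t.2; last by rewrite !peval_cons IHp peval_cons addrCA.
rewrite !peval_cons addrA -st -mulrDl -intrD [t.1 + _]addrC.
by case: eqP => [->|_]; rewrite ?mul0r ?add0r ?peval_cons.
Qed.

Lemma peval_norm p : peval (spoly_norm p) = peval p.
Proof.
rewrite /spoly_norm; elim: p => [|t p IHp] //=.
by rewrite peval_insert !peval_cons IHp /meval (perm_big _ (permEl (perm_sort _ _))).
Qed.

Lemma peval_pairs c p q :
  peval [seq (c * a.1 * b.1, a.2 ++ b.2) | a <- p, b <- q] = c%:~R * peval p * peval q.
Proof.
rewrite /peval big_allpairs_dep -mulrA mulr_suml mulr_sumr; apply: eq_bigr => a _.
rewrite !mulr_sumr; apply: eq_bigr => b _.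
by rewrite /meval big_cat /= !intrM -!mulrA; congr (_ * (_ * _)); exact: mulrCA.
Qed.

Lemma nth_svec_of f k : (k < 24)%N -> nth [::] (svec_of f) k = f k.
Proof. by move=> lt_k24; rewrite (nth_map 0%N) ?size_iota // nth_iota. Qed.

Lemma svec_eval_of f : svec_eval (svec_of f) = \row_(k < 24) peval (f k).
Proof. by apply/rowP => k; rewrite !mxE nth_svec_of. Qed.

Lemma coord_svec_eval A i : (i < 24)%N -> coord (svec_eval A) i = peval (nth [::] A i).
Proof. by move=> lt_i24; rewrite /coord mxE inordK. Qed.

Lemma svec_eval_basis k : svec_eval (svec_basis k) = basis R k.
Proof.
rewrite svec_eval_of; apply/rowP => i; rewrite !mxE.
by case: eqP; rewrite /peval ?big_cons big_nil /meval ?big_nil ?mulr1 ?addr0.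
Qed.

Lemma svec_eval_zero : svec_eval svec_zero = 0.
Proof. by rewrite svec_eval_of; apply/rowP => k; rewrite !mxE /peval big_nil. Qed.

Lemma svec_eval_add A B : svec_eval (svec_add A B) = svec_eval A + svec_eval B.
Proof. by rewrite svec_eval_of; apply/rowP => k; rewrite !mxE peval_norm peval_cat. Qed.

Lemma svec_eval_scale c A : svec_eval (svec_scale c A) = c%:~R *: svec_eval A.
Proof.
rewrite svec_eval_of; apply/rowP => k; rewrite !mxE /peval big_map mulr_sumr.
by apply: eq_bigr => t _; rewrite intrM mulrA.
Qed.

Lemma svec_eval_opp A : svec_eval (svec_scale (-1) A) = - svec_eval A.
Proof. by rewrite svec_eval_scale rmorphN1 scaleN1r. Qed.

Lemma svec_eval_sub A B : svec_eval (svec_sub A B) = svec_eval A - svec_eval B.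
Proof. by rewrite svec_eval_add svec_eval_opp. Qed.

Lemma mul_table_bounded :
  all (all (fun t => (sleft t < 24) && (sright t < 24))%N) mul_table.
Proof. by vm_compute. Qed.

Lemma svec_eval_amul A B : svec_eval (svec_mul A B) = amul (svec_eval A) (svec_eval B).
Proof.
rewrite svec_eval_of; apply/rowP => k; rewrite !mxE peval_norm peval_flatten big_map.
rewrite big_seq [in RHS]big_seq; apply: eq_bigr => t t_k; rewrite peval_pairs.
have k_table : nth [::] mul_table k \in mul_table by rewrite mem_nth // size_map size_iota.
have /andP[lt_l lt_r] := allP (allP mul_table_bounded _ k_table) t t_k.
by rewrite !coord_svec_eval.
Qed.

Lemma svec_eval_eq A B : svec_eq A B -> svec_eval A = svec_eval B.
Proof.
move=> /allP AB; apply/eqP; rewrite -subr_eq0 -svec_eval_sub; apply/eqP/rowP => k.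
rewrite !mxE; suff -> : nth [::] (svec_sub A B) k = [::] by rewrite /peval big_nil.
have [lt_k|ge_k] := ltnP k (size (svec_sub A B)); last exact: nth_default.
exact/eqP/AB/mem_nth.
Qed.

End Evaluation.

(* Variable m * 24 + k stands for the k-th coordinate of the m-th vector of us. *)
Definition env_of (R : comNzRingType) (us : seq (engel_alg R)) (n : nat) : R :=
  coord (nth 0 us (n %/ 24)) (n %% 24).

Lemma svec_eval_var (R : comNzRingType) (us : seq (engel_alg R)) m :
  svec_eval (env_of us) (svec_var m) = nth 0 us m.
Proof.
rewrite svec_eval_of; apply/rowP => k; rewrite !mxE /peval big_seq1 /meval big_seq1.
by rewrite mul1r /env_of divnMDl // divn_small // addn0 modnMDl modn_small // /coord inord_val.
Qed.

Lemma amulA_check : svec_eq (svec_mul (svec_mul (svec_var 0) (svec_var 1)) (svec_var 2))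
                            (svec_mul (svec_var 0) (svec_mul (svec_var 1) (svec_var 2))).
Proof. by vm_compute. Qed.

Lemma amul1_check : svec_eq (svec_mul (svec_basis 0) (svec_var 0)) (svec_var 0).
Proof. by vm_compute. Qed.

Lemma amulr1_check : svec_eq (svec_mul (svec_var 0) (svec_basis 0)) (svec_var 0).
Proof. by vm_compute. Qed.

Section RingAxioms.
Variable R : comNzRingType.

Lemma amulA : associative (@amul R).
Proof.
move=> u v w; have := svec_eval_eq (env_of [:: u; v; w]) amulA_check.
by rewrite !svec_eval_amul !svec_eval_var.
Qed.

Lemma amul1 : left_id (basis R 0) (@amul R).
Proof.
move=> u; have := svec_eval_eq (env_of [:: u]) amul1_check.
(* Both sides are convertible by computation, so the rewrite must be confined. *)
by rewrite [LHS]svec_eval_amul svec_eval_basis svec_eval_var.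
Qed.

Lemma amulr1 : right_id (basis R 0) (@amul R).
Proof.
move=> u; have := svec_eval_eq (env_of [:: u]) amulr1_check.
by rewrite [LHS]svec_eval_amul svec_eval_basis svec_eval_var.
Qed.

End RingAxioms.

HB.instance Definition _ (R : comNzRingType) :=
  GRing.Zmodule_isNzRing.Build (engel_alg R) (@amulA R) (@amul1 R) (@amulr1 R)
    (@amulDl R) (@amulDr R) (@basis0_neq0 R).
HB.instance Definition _ (R : comNzRingType) :=
  GRing.Lmodule_isLalgebra.Build R (engel_alg R) (@scale_amull R).
HB.instance Definition _ (R : comNzRingType) :=
  GRing.Lalgebra_isAlgebra.Build R (engel_alg R) (@scale_amulr R).

Section RingEvaluation.
Variables (R : comNzRingType) (env : nat -> R).
Local Notation ev := (svec_eval env).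

Lemma svec_eval_mul A B : ev (svec_mul A B) = ev A * ev B.
Proof. exact: svec_eval_amul. Qed.

Lemma svec_eval_exp A n : ev (svec_exp A n) = ev A ^+ n.
Proof. by elim: n => [|n IHn]; rewrite ?svec_eval_basis // exprS -IHn -svec_eval_mul. Qed.

Lemma svec_eval_geom A n : ev (svec_geom A n) = \sum_(i < n) (- ev A) ^+ i.
Proof.
rewrite -(big_mkord xpredT) /index_iota subn0 /svec_geom.
elim: (iota 0 n) => [|i s IHs] /=; rewrite ?big_nil ?svec_eval_zero //.
by rewrite big_cons svec_eval_add IHs svec_eval_exp svec_eval_opp.
Qed.

Lemma svec_eval_word w : ev (svec_word w) = \prod_(i <- w) basis R i.
Proof.
elim: w => [|i w IHw] /=; first by rewrite big_nil svec_eval_basis.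
by rewrite big_cons svec_eval_mul IHw svec_eval_basis.
Qed.

Lemma svec_eval_lie_iter A B k :
  lie_iter (ev A) (ev B) k = ev (svec_lie_iter A B k).
Proof. by elim: k => //= k ->; rewrite /lie_br svec_eval_sub !svec_eval_mul. Qed.

Lemma svec_eval_gcomm_iter A A' B B' k :
  gcomm_iter (ev A) (ev A') (ev B) (ev B') k =
  (ev (svec_gcomm_iter A A' B B' k).1, ev (svec_gcomm_iter A A' B B' k).2).
Proof.
elim: k => //= k ->; case: svec_gcomm_iter => C C' /=.
by rewrite !svec_eval_mul.
Qed.

End RingEvaluation.

(** * The Lie algebra is 5-Engel, the group of units is not *)

Lemma engel_check : svec_eq (svec_lie_iter (svec_var 0) (svec_var 1) 5) svec_zero.
Proof. by vm_compute. Qed.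

Lemma engel_alg_lie_engel (R : comNzRingType) : lie_engel (engel_alg R) 5.
Proof.
move=> u v; have := svec_eval_eq (env_of [:: u; v]) engel_check.
by rewrite -[LHS]svec_eval_lie_iter !svec_eval_var svec_eval_zero.
Qed.

Lemma nilpotent_inverse_pair (R : pzRingType) (x : R) n :
  x ^+ n = 0 -> is_inverse_pair (1 + x) (\sum_(i < n) (- x) ^+ i).
Proof.
move=> xn0; have inv_r : (1 + x) * \sum_(i < n) (- x) ^+ i = 1.
  apply: oppr_inj; rewrite -mulNr opprD addrC -[RHS]sub0r.
  by rewrite -subrX1 exprNn xn0 mulr0.
split=> //; rewrite -[RHS]inv_r; apply/esym/commr_sum => i _.
by apply/commrX/commrN/commr_sym/commrD; [exact: commr1 | exact: commr_refl].
Qed.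

Lemma basis5_sqr_check : svec_eq (svec_exp (svec_basis 5) 2) svec_zero.
Proof. by vm_compute. Qed.

Lemma basis1_exp5_check : svec_eq (svec_exp (svec_basis 1) 5) svec_zero.
Proof. by vm_compute. Qed.

Lemma gcomm_check :
  svec_eq (svec_gcomm_iter (svec_add (svec_basis 0) (svec_basis 5)) (svec_geom (svec_basis 5) 2)
                           (svec_add (svec_basis 0) (svec_basis 1)) (svec_geom (svec_basis 1) 5) 5).1
          (svec_add (svec_basis 0) (svec_scale 12%:Z (svec_basis 23))).
Proof. by vm_compute. Qed.

Section Units.
Variable R : comNzRingType.
Local Notation ev := (svec_eval (fun=> 0 : R)).

Lemma basis5_sqr : basis R 5 ^+ 2 = 0.
Proof.
have := svec_eval_eq (fun=> 0 : R) basis5_sqr_check.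
by rewrite [LHS]svec_eval_exp svec_eval_basis svec_eval_zero.
Qed.

Lemma basis1_exp5 : basis R 1 ^+ 5 = 0.
Proof.
have := svec_eval_eq (fun=> 0 : R) basis1_exp5_check.
by rewrite [LHS]svec_eval_exp svec_eval_basis svec_eval_zero.
Qed.

Lemma engel_alg_gcomm :
  (gcomm_iter (1 + basis R 5) (\sum_(i < 2) (- basis R 5) ^+ i)
              (1 + basis R 1) (\sum_(i < 5) (- basis R 1) ^+ i) 5).1
  = 1 + 12%:R *: basis R 23.
Proof.
have basisE k : basis R k = ev (svec_basis k) by rewrite svec_eval_basis.
rewrite -[1 : engel_alg R]/(basis R 0) !basisE -!svec_eval_geom -!svec_eval_add.
rewrite svec_eval_gcomm_iter /= (svec_eval_eq _ gcomm_check).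
by rewrite svec_eval_add svec_eval_scale !svec_eval_basis -pmulrn.
Qed.

Lemma engel_alg_units_not_engel : (12%:R : R) != 0 -> ~ units_engel (engel_alg R) 5.
Proof.
move=> nz12 engel.
have := engel _ _ _ _ (nilpotent_inverse_pair basis5_sqr) (nilpotent_inverse_pair basis1_exp5).
rewrite engel_alg_gcomm => /eqP; rewrite -subr_eq0 [1 + _]addrC addrK.
move=> /eqP/rowP/(_ (inord 23)); rewrite !mxE inordK //= mulr1 => /eqP.
by rewrite (negbTE nz12).
Qed.

End Units.

(** * Generation by two nilpotent elements *)

Lemma words_check :
  all (fun k => let: (c, w) := nth (0%N, [::]) basis_words k in
        [&& all (fun i => i \in [:: 1; 5]%N) w, (0 < c)%N,
            all (fun p => p \in [:: 2; 3]%N) (primes c)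
          & svec_eq (svec_word w) (svec_scale c%:Z (svec_basis k))])
      (iota 0 24).
Proof. by vm_compute. Qed.

Lemma natf_neq0_primes23 (F : fieldType) c :
  2%N \notin [pchar F] -> 3%N \notin [pchar F] ->
  (0 < c)%N -> all (fun p => p \in [:: 2; 3]%N) (primes c) -> (c%:R : F) != 0.
Proof.
move=> h2 h3 c_gt0 /allP c23; rewrite natf_neq0_pchar /pnat c_gt0; apply/allP => p /c23.
by rewrite !inE => /orP[]/eqP->.
Qed.

Lemma basis_monomial (F : fieldType) k :
  2%N \notin [pchar F] -> 3%N \notin [pchar F] -> (k < 24)%N ->
  exists c w, [/\ all (fun i => i \in [:: 1; 5]%N) w, (c%:R : F) != 0
                 & \prod_(i <- w) basis F i = c%:R *: basis F k].
Proof.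
move=> h2 h3 lt_k24; have := allP words_check k; rewrite mem_iota => /(_ lt_k24).
case: nth => c w /and4P[w15 c_gt0 c23 /(svec_eval_eq (fun=> 0 : F))].
rewrite svec_eval_word svec_eval_scale svec_eval_basis -pmulrn => word_k.
by exists c, w; split=> //; apply: natf_neq0_primes23.
Qed.

Lemma delta_basis (R : comNzRingType) (k : 'I_24) : delta_mx 0 k = basis R k.
Proof. by apply/rowP => i; rewrite !mxE. Qed.

Lemma engel_alg_gen_by_2_nilpotents (F : fieldType) :
  2%N \notin [pchar F] -> 3%N \notin [pchar F] -> gen_by_2_nilpotents (engel_alg F).
Proof.
move=> h2 h3; exists (basis F 5), (basis F 1).
split; first by exists 2%N; exact: basis5_sqr.
split; first by exists 5%N; exact: basis1_exp5.
move=> r S S1 Sx Sy SD SZ SM.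
have S_basis k : (k < 24)%N -> S (basis F k).
  move=> /(basis_monomial h2 h3)[c [w [/allP w15 nz_c word_k]]].
  rewrite -[basis F k]scale1r -(mulVf nz_c) -scalerA -word_k; apply: SZ.
  elim: w w15 {word_k} => [|i w IHw] w15; rewrite ?big_nil ?big_cons //.
  apply: SM; last by apply: IHw => j wj; apply: w15; rewrite inE wj orbT.
  by have := w15 i (mem_head _ _); rewrite !inE => /orP[]/eqP->.
rewrite [r]row_sum_delta; apply: big_ind => [|u v|k _].
- by rewrite -(scale0r (1 : engel_alg F)); apply: SZ.
- exact: SD.
- by rewrite delta_basis; apply/SZ/S_basis.
Qed.

Theorem theorem1p1 (F : fieldType) (h2 : 2%N \notin [pchar F]) (h3 : 3%N \notin [pchar F]) :
  exists R : algType F,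
    lie_engel R 5 /\ ~ units_engel R 5 /\ gen_by_2_nilpotents R.
Proof.
exists (engel_alg F); split; first exact: engel_alg_lie_engel.
split; last exact: engel_alg_gen_by_2_nilpotents.
by apply/engel_alg_units_not_engel/natf_neq0_primes23.
Qed.
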